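(* Under the hypotheses of Theorem 1 (walk $\{S_n\}$, stationary scenery $\{\xi(k)\}$ independent of the walk, $n\mathbb{P}(\xi(0)>u_n)\to\tau\ge0$, conditions $D(u_n)$ and $D'(u_n)$ with sequences $(\alpha_{n,l})$, $(l_n)$, $(k_n)$), and with the blocks $B_j$, stripes $L_j$, $\mathcal{L}_n$ and $K_n$ defined in the context, for almost every realization of $\{S_n,n\in\mathbb{N}_+\}$ the following hold as $n\to\infty$: (i) $\mathbb{P}(M_{\mathcal{S}_n}\le u_n)-\mathbb{P}(M_{\mathcal{S}_n\setminus\mathcal{L}_n}\le u_n)\to0$; (ii) $\mathbb{P}(M_{\mathcal{S}_n\setminus\mathcal{L}_n}\le u_n)-\prod_{j\le K_n}\mathbb{P}(M_{B_j\setminus\mathcal{L}_n}\le u_n)\to0$; (iii) $\prod_{j\le K_n}\mathbb{P}(M_{B_j\setminus\mathcal{L}_n}\le u_n)-\prod_{j\le K_n}\mathbb{P}(M_{B_j}\le u_n)\to0$. All probabilities are with respect to the scenery, with the realization of the walk fixed.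
   Context: Setting: $\{X_k\}$ centered integer-valued i.i.d., in the domain of attraction of an $\alpha$-stable law with $\alpha\in(0,1)$, $S_n=X_1+\cdots+X_n$; $\{\xi(k),k\in\mathbb{Z}\}$ stationary real random variables independent of $\{X_k\}$; $n\mathbb{P}(\xi(0)>u_n)\to\tau\ge0$. Condition $D(u_n)$: with $F_{i_1,\ldots,i_p}(u)=\mathbb{P}(\xi(i_1)\le u,\ldots,\xi(i_p)\le u)$, there exist $(\alpha_{n,l})_{(n,l)\in\mathbb{N}^2}$ and positive integers $(l_n)$ with $\alpha_{n,l_n}\to0$, $l_n=o(n)$, such that $|F_{i_1,\ldots,i_p,j_1,\ldots,j_{p'}}(u_n)-F_{i_1,\ldots,i_p}(u_n)F_{j_1,\ldots,j_{p'}}(u_n)|\le\alpha_{n,l}$ whenever $i_1<\cdots<i_p<j_1<\cdots<j_{p'}$ and $j_1-i_p\ge l$, uniformly in $p,p'$. Condition $D'(u_n)$: there exist integers $(k_n)$ with $k_n\to\infty$, $\frac{n^2}{k_n}\alpha_{n,l_n}\to0$, $k_nl_n=o(n)$, and $n\sum_{j=1}^{\lfloor n/k_n\rfloor}\mathbb{P}(\xi(0)>u_n,\xi(j)>u_n)\to0$. Notation: for $B\subset\mathbb{Z}$, $M_B=\max_{k\in B}\xi(k)$ (with $M_\emptyset=-\infty$). For a fixed realization of the walk, $\mathcal{S}_n=\{S_1,\ldots,S_n\}$, $R_n=\#\mathcal{S}_n$, $r_n=\lfloor n/(k_n-1)\rfloor+1$, $K_n=\lfloor R_n/r_n\rfloor+1$.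 The blocks $B_1,\ldots,B_{K_n}$ are the unique subsets of $\mathcal{S}_n$ with $\bigcup_{j\le K_n}B_j=\mathcal{S}_n$, $\#B_i=r_n$ and $\max B_i<\min B_{i+1}$ for $i\le K_n-1$ (so $\#B_{K_n}=R_n-(K_n-1)r_n$ and $K_n\le k_n$). For $j\le K_n-1$, the stripe $L_j$ is the set of the $l_n$ largest elements of $B_j$; $L_{K_n}$ is the set of the $l_n$ largest elements of $B_{K_n}$ if $\#B_{K_n}\ge l_n$, and $L_{K_n}=\emptyset$ otherwise. $\mathcal{L}_n=\bigcup_{j\le K_n}L_j$. *)

From HB Require Import structures.
From mathcomp Require Import all_boot all_order all_algebra.
From mathcomp Require Import all_classical all_reals all_analysis.
Set Implicit Arguments. Unset Strict Implicit. Unset Printing Implicit Defensive.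
Import Order.TTheory GRing.Theory Num.Theory.
Import numFieldNormedType.Exports.
Local Open Scope classical_set_scope.
Local Open Scope ring_scope.

Section Defs.
Context (R : realType).

Definition prR d (T : measurableType d) (P : probability T R) (A : set T) : R :=
  fine (P A).

(** X k is X_{k+1}; S_n = X_1 + ... + X_n. *)
Definition walkS (T : Type) (X : nat -> T -> int) (n : nat) (w : T) : int :=
  \sum_(i < n) X i w.

Section Walk.
Context d (T : measurableType d) (P : probability T R).


(** i.i.d. integer-valued random variables (independence of discrete
    variables written through the point events {X_k = z}). *)
Definition iid_int (X : nat -> T -> int) : Prop :=
  [/\ (forall i, measurable_fun setT (fun w => (X i w)%:~R : R)),
      (forall i z, P [set w | X i w = z] = P [set w | X 0%N w = z]) &
      (forall (s : seq nat) (z : nat -> int), uniq s ->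
         prR P [set w | forall i, i \in s -> X i w = z i] =
         \prod_(i <- s) prR P [set w | X i w = z i])].

End Walk.

(** Characteristic function of the alpha-stable law S_alpha(sigma,beta,mu)
    (alpha <> 1), split into real and imaginary parts:
    phi(t) = exp(-sigma^alpha |t|^alpha (1 - i beta sgn(t) tan(pi alpha/2)) + i mu t). *)
Definition stable_cf_re (a sigma beta mu t : R) : R :=
  expR (- (sigma `^ a * `|t| `^ a)) *
  cos (mu * t + sigma `^ a * `|t| `^ a * beta * Num.sg t * tan (pi * a / 2)).
Definition stable_cf_im (a sigma beta mu t : R) : R :=
  expR (- (sigma `^ a * `|t| `^ a)) *
  sin (mu * t + sigma `^ a * `|t| `^ a * beta * Num.sg t * tan (pi * a / 2)).

Definition is_stable_law (a : R) (nu : probability R R) : Prop :=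
  exists sigma beta mu : R, [/\ 0 < sigma, -1 <= beta <= 1 &
    forall t : R,
      (\int[nu]_x (cos (t * x))%:E = (stable_cf_re a sigma beta mu t)%:E)%E /\
      (\int[nu]_x (sin (t * x))%:E = (stable_cf_im a sigma beta mu t)%:E)%E].

Definition cdf (nu : probability R R) (x : R) : R := fine (nu [set y | y <= x]).

Definition cvg_in_distr (F : nat -> R -> R) (nu : probability R R) : Prop :=
  forall x : R, {for x, continuous (cdf nu)} ->
    (fun n => F n x) @ \oo --> cdf nu x.

Definition domain_of_attraction d (T : measurableType d) (P : probability T R)
  (X : nat -> T -> int) (a : R) : Prop :=
  exists (an bn : nat -> R) (nu : probability R R),
    [/\ (forall n, 0 < an n), is_stable_law a nu &
        cvg_in_distr
          (fun n x => prR P [set w | ((walkS X n w)%:~R - bn n) / an n <= x]) nu].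

Section Scenery.
Context d (T : measurableType d) (P : probability T R).

(** Event {M_B <= u} for a finite set B of sites (M_emptyset = -oo). *)
Definition max_le (xi : int -> T -> R) (B : seq int) (u : R) : set T :=
  [set w | forall z, z \in B -> xi z w <= u].

Definition stationary (xi : int -> T -> R) : Prop :=
  forall (s : seq int) (A : int -> set R) (h : int),
    (forall z, measurable (A z)) ->
    P [set w | forall z, z \in s -> A z (xi z w)] =
    P [set w | forall z, z \in s -> A z (xi (z + h) w)].

Definition Fjoint (xi : int -> T -> R) (s : seq int) (u : R) : R :=
  prR P (max_le xi s u).

Definition cond_D (xi : int -> T -> R) (u : nat -> R)
    (alph : nat -> nat -> R) (l : nat -> nat) : Prop :=
  [/\ (fun n => alph n (l n)) @ \oo --> 0,
      (forall n, (0 < l n)%N),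
      (fun n => (l n)%:R / n%:R) @ \oo --> (0 : R) &
      forall (n lag : nat) (i j : seq int),
        i != [::] -> j != [::] ->
        sorted (fun x y : int => x < y) i -> sorted (fun x y : int => x < y) j ->
        last 0 i < head 0 j -> last 0 i + lag%:Z <= head 0 j ->
        `| Fjoint xi (i ++ j) (u n) - Fjoint xi i (u n) * Fjoint xi j (u n) |
          <= alph n lag].

Definition cond_D' (xi : int -> T -> R) (u : nat -> R)
    (alph : nat -> nat -> R) (l k : nat -> nat) : Prop :=
  [/\ (forall n, (0 < k n)%N),
      (forall M : nat, \forall n \near \oo, (M <= k n)%N),
      (fun n => n%:R ^+ 2 / (k n)%:R * alph n (l n)) @ \oo --> (0 : R),
      (fun n => (k n * l n)%:R / n%:R) @ \oo --> (0 : R) &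
      (fun n => n%:R * \sum_(1 <= j < (n %/ k n).+1)
          prR P [set w | u n < xi 0 w /\ u n < xi j%:Z w]) @ \oo --> (0 : R)].

End Scenery.

Section Blocks.
Context (T : Type).
Variables (X : nat -> T -> int) (k l : nat -> nat).

Definition range_seq (n : nat) (w : T) : seq int :=
  sort (fun x y : int => x <= y) (undup [seq walkS X m w | m <- iota 1 n]).

Definition rlen (n : nat) : nat := n %/ (k n).-1 + 1.

Definition Kn (n : nat) (w : T) : nat := size (range_seq n w) %/ rlen n + 1.

(** Block B_{j+1}, j = 0, ..., K_n - 1 (increasingly listed). *)
Definition block (n : nat) (w : T) (j : nat) : seq int :=
  take (rlen n) (drop (j * rlen n) (range_seq n w)).

(** Stripe L_{j+1}: the l_n largest elements of B_{j+1}; for the last block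
    it is empty when #B_{K_n} < l_n. *)
Definition stripe (n : nat) (w : T) (j : nat) : seq int :=
  let B := block n w j in
  if (j.+1 < Kn n w)%N || (l n <= size B)%N then drop (size B - l n) B else [::].

Definition stripes (n : nat) (w : T) : seq int :=
  flatten [seq stripe n w j | j <- iota 0 (Kn n w)].

End Blocks.

End Defs.

(* The three estimates hold for every realization of the walk; only the
   hypotheses on the scenery and on (l_n), (k_n) are used.  Let p_n be the
   exceedance probability P(xi(0) > u_n), which by stationarity is that of
   every site.
   (i)  Deleting a set of sites raises P(M <= u_n) by at most p_n per deleted
        site; there are at most K_n l_n <= k_n l_n stripe sites, and
        k_n l_n p_n = (k_n l_n / n) (n p_n) -> 0 * tau.
   (ii) Once the stripes are removed, consecutive blocks are at distance at
        least l_n, so condition D(u_n) splits the maximum over the union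
        block by block at a cost alpha_{n,l_n} each: in total
        K_n alpha_{n,l_n} <= (n^2 / k_n) alpha_{n,l_n} -> 0.
   (iii) A difference of products of numbers in [0,1] is at most the sum of
        the differences, and the block-wise estimate of (i) adds up again to
        k_n l_n p_n. *)
From HB Require Import structures.
From mathcomp Require Import all_boot all_order all_algebra.
From mathcomp Require Import all_classical all_reals all_analysis.
From mathcomp Require Import ring lra zify.
Import Order.TTheory GRing.Theory Num.Theory.
Import numFieldNormedType.Exports.
Set Implicit Arguments. Unset Strict Implicit. Unset Printing Implicit Defensive.
Local Open Scope classical_set_scope.
Local Open Scope ring_scope.

Section RealProbability.
Context (R : realType) d (T : measurableType d) (P : probability T R).

Lemma prR_ge0 A : 0 <= prR P A.
Proof. by rewrite /prR fine_ge0. Qed.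

Lemma prRE A : measurable A -> P A = (prR P A)%:E.
Proof. by move=> mA; rewrite /prR fineK // fin_num_measure. Qed.

Lemma prR_le1 A : measurable A -> prR P A <= 1.
Proof. by move=> mA; rewrite -lee_fin -prRE // probability_le1. Qed.

Lemma prR_setT : prR P setT = 1.
Proof. by rewrite /prR probability_setT. Qed.

Lemma prR_setDI A B : measurable A -> measurable B ->
  prR P A = prR P (A `\` B) + prR P (A `&` B).
Proof.
move=> mA mB; rewrite /prR -fineD; first by rewrite -measureDI.
  by apply: fin_num_measure; exact: measurableD.
by apply: fin_num_measure; exact: measurableI.
Qed.

Lemma le_prR A B : measurable A -> measurable B -> A `<=` B ->
  prR P A <= prR P B.
Proof. by move=> mA mB AB; rewrite -lee_fin -!prRE // le_measure // inE. Qed.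

Lemma stationary_prR_exceed (xi : int -> T -> R) (u : R) (z : int) :
  stationary P xi -> prR P [set w | u < xi z w] = prR P [set w | u < xi 0 w].
Proof.
move=> stat.
have E (f : int -> int) : [set w | u < xi (f 0) w] =
    [set w | forall y, y \in [:: 0] -> [set x | u < x] (xi (f y) w)].
  apply/seteqP; split => w /=; last by apply; rewrite inE.
  by move=> H y; rewrite inE => /eqP ->.
have mA (y : int) : measurable [set x : R | u < x].
  have := measurable_itv `]u, +oo[.
  by congr measurable; apply/seteqP; split => x /=; rewrite in_itv /= andbT.
rewrite -[z]add0r (E (fun y => y + z)) (E id) /prR.
by rewrite (stat [:: 0] (fun _ => [set x | u < x]) z mA).
Qed.

End RealProbability.

Section SceneryMaxima.
Context (R : realType) d (T : measurableType d) (P : probability T R)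
  (xi : int -> T -> R) (u : R).
Hypothesis mxi : forall z, measurable_fun setT (xi z).

Lemma measurable_xi_le z : measurable [set w | xi z w <= u].
Proof.
have := mxi z measurableT (measurable_itv `] -oo, u]); rewrite setTI.
by congr measurable; apply/seteqP; split => w /=; rewrite in_itv.
Qed.

Lemma measurable_xi_gt z : measurable [set w | u < xi z w].
Proof.
have := mxi z measurableT (measurable_itv `]u, +oo[); rewrite setTI.
by congr measurable; apply/seteqP; split => w /=; rewrite in_itv /= andbT.
Qed.

Lemma max_le_nil : max_le xi [::] u = setT.
Proof. by apply/seteqP; split => w //= _ z; rewrite in_nil. Qed.

Lemma max_le_cons z s :
  max_le xi (z :: s) u = [set w | xi z w <= u] `&` max_le xi s u.
Proof.
apply/seteqP; split => w /=.
  by move=> H; split=> [|y ys]; apply: H; rewrite inE ?eqxx ?ys ?orbT.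
by move=> [H1 H2] y; rewrite inE => /orP[/eqP->//|]; exact: H2.
Qed.

Lemma eq_max_le s t : s =i t -> max_le xi s u = max_le xi t u.
Proof.
by move=> st; apply/seteqP; split => w /= H z zs; apply: H; rewrite ?st // -st.
Qed.

Lemma measurable_max_le s : measurable (max_le xi s u).
Proof.
elim: s => [|z s IH]; first by rewrite max_le_nil.
by rewrite max_le_cons; apply: measurableI => //; exact: measurable_xi_le.
Qed.

Lemma prR_max_le_01 s : 0 <= prR P (max_le xi s u) <= 1.
Proof. by rewrite prR_ge0 prR_le1 //; exact: measurable_max_le. Qed.

Variable p : R.
Hypothesis exceed_le : forall z, prR P [set w | u < xi z w] <= p.

Lemma prR_max_le_cat t s :
  0 <= prR P (max_le xi s u) - prR P (max_le xi (t ++ s) u) <= (size t)%:R * p.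
Proof.
elim: t => [|z t IH] /=; first by rewrite subrr mul0r lexx.
have mts := measurable_max_le (t ++ s).
have split_z := prR_setDI P mts (measurable_xi_le z).
have exc_z : prR P (max_le xi (t ++ s) u `\` [set w | xi z w <= u]) <= p.
  apply: le_trans (exceed_le z); apply: le_prR.
  - exact: measurableD (measurable_xi_le _).
  - exact: measurable_xi_gt.
  - by move=> w [_ /= H]; rewrite ltNge; apply/negP.
have := prR_ge0 P (max_le xi (t ++ s) u `\` [set w | xi z w <= u]).
rewrite max_le_cons setIC -addn1 natrD mulrDl mul1r.
by move/andP: IH => [? ?] ?; apply/andP; split; lra.
Qed.

Lemma prR_max_le_filter (L s : seq int) :
  0 <= prR P (max_le xi [seq z <- s | z \notin L] u) - prR P (max_le xi s u)
    <= (count (mem L) s)%:R * p.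
Proof.
rewrite (@eq_max_le s ([seq z <- s | z \in L] ++ [seq z <- s | z \notin L])).
  by rewrite -size_filter; exact: prR_max_le_cat.
by move=> z; rewrite mem_cat !mem_filter; case: (z \in L); case: (z \in s).
Qed.

End SceneryMaxima.

Lemma prod_in01 (R : realType) (I : Type) (f : I -> R) (s : seq I) :
  (forall i, 0 <= f i <= 1) -> 0 <= \prod_(i <- s) f i <= 1.
Proof.
move=> f01; elim: s => [|a s IH]; first by rewrite big_nil ler01 lexx.
rewrite big_cons; move/andP: IH => [I1 I2]; have /andP[h1 h2] := f01 a.
by apply/andP; split; nra.
Qed.

Lemma norm_prodB_le_sum (R : realType) (I : Type) (f g : I -> R) (s : seq I) :
  (forall i, 0 <= f i <= 1) -> (forall i, 0 <= g i <= 1) ->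
  `|\prod_(i <- s) f i - \prod_(i <- s) g i| <= \sum_(i <- s) `|f i - g i|.
Proof.
move=> f01 g01; elim: s => [|a s IH]; first by rewrite !big_nil subrr normr0.
rewrite !big_cons.
have /andP[A0 A1] := prod_in01 s f01; have /andP[g0 g1] := g01 a.
set A := \prod_(i <- s) f i in A0 A1 IH *; set B := \prod_(i <- s) g i in IH *.
have -> : f a * A - g a * B = (f a - g a) * A + g a * (A - B) by ring.
apply: le_trans (ler_normD _ _) _; rewrite !normrM (ger0_norm A0) (ger0_norm g0).
have := normr_ge0 (f a - g a); have := normr_ge0 (A - B); nra.
Qed.

Fixpoint gapped (lag : int) (bs : seq (seq int)) : Prop :=
  match bs with
  | [::] => True
  | b :: bs' => (forall x y, x \in b -> y \in flatten bs' -> x + lag <= y)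
                /\ gapped lag bs'
  end.

Section Mixing.
Context (R : realType) d (T : measurableType d) (P : probability T R)
  (xi : int -> T -> R) (u : R).
Hypothesis mxi : forall z, measurable_fun setT (xi z).
Variables (al : R) (lag : nat).
Hypothesis lag_gt0 : (0 < lag)%N.
Hypothesis al_ge0 : 0 <= al.
Hypothesis mixing : forall (i j : seq int),
  i != [::] -> j != [::] ->
  sorted (fun x y : int => x < y) i -> sorted (fun x y : int => x < y) j ->
  last 0 i < head 0 j -> last 0 i + lag%:Z <= head 0 j ->
  `| Fjoint P xi (i ++ j) u - Fjoint P xi i u * Fjoint P xi j u | <= al.

Lemma prR_max_le_split b r :
  (forall x y, x \in b -> y \in r -> x + lag%:Z <= y) ->
  sorted (fun x y : int => x < y) (b ++ r) ->
  `| prR P (max_le xi (b ++ r) u)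
     - prR P (max_le xi b u) * prR P (max_le xi r u) | <= al.
Proof.
case: b => [|x b] gap srt; first by rewrite max_le_nil prR_setT mul1r subrr normr0.
case: r gap srt => [|y r] gap srt.
  by rewrite cats0 max_le_nil prR_setT mulr1 subrr normr0.
have [sb sr] := cat_sorted2 srt.
have hg : last 0 (x :: b) + lag%:Z <= head 0 (y :: r).
  by apply: gap => /=; [exact: mem_last | exact: mem_head].
apply: mixing => //; apply: lt_le_trans hg; by rewrite ltrDl ltz_nat.
Qed.

Lemma prR_max_le_flatten bs :
  gapped lag bs -> sorted (fun x y : int => x < y) (flatten bs) ->
  `| prR P (max_le xi (flatten bs) u) - \prod_(b <- bs) prR P (max_le xi b u) |
    <= (size bs)%:R * al.
Proof.
elim: bs => [|b bs IH] /=.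
  by rewrite big_nil max_le_nil prR_setT subrr normr0 mul0r lexx.
move=> [gap_b gap_bs] srt; have [_ srt_bs] := cat_sorted2 srt.
have split_b := prR_max_le_split gap_b srt.
have /andP[F0 F1] := prR_max_le_01 P u mxi b.
set Fb := prR P (max_le xi b u) in split_b F0 F1 *.
set Fr := prR P (max_le xi (flatten bs) u) in split_b IH *.
set Pr := \prod_(j <- bs) _ in IH *.
rewrite big_cons -/Pr.
have -> : prR P (max_le xi (b ++ flatten bs) u) - Fb * Pr =
    (prR P (max_le xi (b ++ flatten bs) u) - Fb * Fr) + Fb * (Fr - Pr) by ring.
apply: le_trans (ler_normD _ _) _; rewrite normrM (ger0_norm F0).
have := IH gap_bs srt_bs; have := normr_ge0 (Fr - Pr).
rewrite -addn1 natrD mulrDl mul1r; nra.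
Qed.

End Mixing.

Lemma flatten_blocks (T : Type) (s : seq T) r m : (size s <= m * r)%N ->
  flatten [seq take r (drop (j * r) s) | j <- iota 0 m] = s.
Proof.
elim: m s => [|m IH] s hs; first by move: hs; rewrite mul0n leqn0 => /nilP ->.
rewrite /= drop0 -[in RHS](cat_take_drop r s); congr cat.
rewrite -[in RHS](IH (drop r s)); last by rewrite size_drop leq_subLR -mulSn.
rewrite (iotaDl 1 0) -map_comp; congr flatten; apply: eq_map => j /=.
by rewrite drop_drop mulSn addnC.
Qed.

Lemma filter_flatten (T : Type) (a : pred T) (bs : seq (seq T)) :
  [seq z <- flatten bs | a z] = flatten [seq [seq z <- b | a z] | b <- bs].
Proof. by elim: bs => //= b bs IH; rewrite filter_cat IH. Qed.

Lemma size_flatten_map_le (T : Type) (f : nat -> seq T) c (s : seq nat) :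
  (forall j, size (f j) <= c)%N -> (size (flatten [seq f j | j <- s]) <= size s * c)%N.
Proof. by move=> H; elim: s => [|j s IH] //=; rewrite size_cat mulSn leq_add. Qed.

Lemma count_mem_uniq_le (T : eqType) (s L : seq T) :
  uniq s -> (count (mem L) s <= size L)%N.
Proof.
move=> us; rewrite -size_filter; apply: uniq_leq_size; first exact: filter_uniq.
by move=> x; rewrite mem_filter => /andP[].
Qed.

Lemma sorted_ltz_nth_gap (s : seq int) i j : sorted (fun x y : int => x < y) s ->
  (i <= j)%N -> (j < size s)%N -> nth 0 s i + (j - i)%:Z <= nth 0 s j.
Proof.
move=> srt; elim: j => [|j IH] ij js.
  by move: ij; rewrite leqn0 => /eqP ->; rewrite subnn addr0.
case: (ltngtP i j.+1) ij => // [ij|<-] _; last by rewrite subnn addr0.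
have step : nth 0 s j < nth 0 s j.+1.
  by apply: (sorted_ltn_nth lt_trans) => //; rewrite inE ?(ltnW js).
rewrite subSn // -addn1 PoszD addrA.
apply: le_trans (_ : nth 0 s j + 1 <= _); first by rewrite lerD2r IH // ltnW.
by rewrite -ltzD1 ltrD2r.
Qed.

Lemma gapped_map_iota (f : nat -> seq int) lag m c :
  (forall j j' x y, (m <= j)%N -> (j < j')%N -> (j' < m + c)%N ->
     x \in f j -> y \in f j' -> x + lag <= y) ->
  gapped lag [seq f j | j <- iota m c].
Proof.
elim: c m => [|c IH] m H //=; split.
  move=> x y xf /flatten_mapP [j']; rewrite mem_iota => /andP[h1 h2] yf.
  by apply: (H m j') => //; move: h2; rewrite addSn addnS.
apply: IH => j j' x y h1 h2 h3; apply: H => //; first exact: ltnW.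
by rewrite addnS -addSn.
Qed.

Section Blocks.
Context (T : Type) (X : nat -> T -> int) (k l : nat -> nat) (n : nat) (w : T).

Let s := range_seq X n w.
Let r := rlen k n.
Let K := Kn X k n w.
Let B := block X k n w.
Let L := stripes X k l n w.

Lemma sorted_range : sorted (fun x y : int => x < y) s.
Proof.
rewrite [sorted _ _](_ : _ = sorted <%O s) // lt_sorted_uniq_le.
by rewrite sort_uniq undup_uniq sort_sorted //; exact: le_total.
Qed.

Lemma uniq_range : uniq s.
Proof. by rewrite /s /range_seq sort_uniq undup_uniq. Qed.

Lemma size_range : (size s <= n)%N.
Proof.
rewrite /s /range_seq size_sort; apply: leq_trans (size_undup _) _.
by rewrite size_map size_iota.
Qed.

Lemma flatten_range_blocks : flatten [seq B j | j <- iota 0 K] = s.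
Proof.
apply: flatten_blocks; rewrite /K /Kn -/s -/r.
have r_gt0 : (0 < r)%N by rewrite /r /rlen addn1.
have := leq_trunc_div (size s) r; have := ltn_ceil (size s) r_gt0.
rewrite mulnDl mul1n; lia.
Qed.

Lemma filter_range_blocks :
  [seq z <- s | z \notin L] =
  flatten [seq [seq z <- B j | z \notin L] | j <- iota 0 K].
Proof. by rewrite -flatten_range_blocks filter_flatten -map_comp. Qed.

Lemma Kn_le_k : (2 <= k n)%N -> (K <= k n)%N.
Proof.
move=> k2; rewrite /K /Kn -/s -/r.
have Hd : (size s %/ r <= n %/ r)%N by apply: leq_div2r; exact: size_range.
suff : (n %/ r < (k n).-1)%N by move: Hd; lia.
rewrite /r /rlen ltn_divLR ?addn1 //.
have := ltn_pmod n (_ : 0 < (k n).-1)%N; have := divn_eq n (k n).-1.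
by move=> E /(_ ltac:(lia)) M; rewrite [X in (X < _)%N]E; nia.
Qed.

Lemma size_stripes_le : (2 <= k n)%N -> (size L <= k n * l n)%N.
Proof.
move=> k2; apply: leq_trans (_ : K * l n <= _)%N; last by rewrite leq_mul2r Kn_le_k ?orbT.
rewrite /L /stripes -/K -[in leqRHS](size_iota 0 K).
apply: size_flatten_map_le => j; rewrite /stripe; case: ifP => _ //.
by rewrite size_drop; lia.
Qed.

Lemma size_block j : size (B j) = minn r (size s - j * r).
Proof. by rewrite /B /block size_take size_drop /minn; case: ifP. Qed.

Lemma nth_block j i : (i < size (B j))%N -> nth 0 (B j) i = nth 0 s (j * r + i).
Proof.
by rewrite size_block leq_min => /andP[ir _]; rewrite /B /block nth_take // nth_drop.
Qed.

Lemma nth_block_notin_stripe j i : (j.+1 < K)%N -> (i < size (B j))%N ->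
  nth 0 (B j) i \notin stripe X k l n w j -> (i + l n < size (B j))%N.
Proof.
move=> jK iB; rewrite /stripe -/B jK /=; apply: contraR; rewrite -leqNgt => H.
set b := B j in iB H *; set m := size b in iB H *.
have -> : nth 0 b i = nth 0 (drop (m - l n) b) (i - (m - l n)).
  by rewrite nth_drop subnKC //; lia.
by apply: mem_nth; rewrite size_drop -/m; lia.
Qed.

Lemma stripped_blocks_gap j j' x y : (j < j')%N -> (j' < K)%N ->
  x \in [seq z <- B j | z \notin L] ->
  y \in [seq z <- B j' | z \notin L] -> x + (l n)%:Z <= y.
Proof.
move=> jj' j'K; rewrite !mem_filter => /andP[xL xB] /andP[_ yB].
have xS : x \notin stripe X k l n w j.
  apply: contra xL => xS; apply/flatten_mapP.
  by exists j => //; rewrite mem_iota /= add0n; apply: ltn_trans j'K.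
have iB := index_mem x (B j); have i'B := index_mem y (B j').
rewrite -(nth_index 0 xB) -(nth_index 0 yB) in xS *.
rewrite xB in iB; rewrite yB in i'B.
have il := nth_block_notin_stripe (leq_ltn_trans jj' j'K) iB xS.
rewrite !nth_block //.
set i := index x (B j) in iB il *; set i' := index y (B j') in i'B *.
have i'_lt : (j' * r + i' < size s)%N.
  by move: i'B; rewrite size_block leq_min -ltn_subRL => /andP[_].
have i_lt : (i < r)%N by move: iB; rewrite size_block leq_min => /andP[].
have pq : (j * r + i + l n <= j' * r + i')%N.
  have : (j.+1 * r <= j' * r)%N by rewrite leq_mul2r jj' orbT.
  move: il; rewrite size_block leq_min mulSn => /andP[il _]; lia.
apply: le_trans (sorted_ltz_nth_gap sorted_range (_ : j * r + i <= _)%N i'_lt); last by lia.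
by rewrite lerD2l lez_nat; lia.
Qed.

Lemma gapped_stripped_blocks :
  gapped (l n) [seq [seq z <- B j | z \notin L] | j <- iota 0 K].
Proof. by apply: gapped_map_iota => j j' x y _ jj' j'K; apply: stripped_blocks_gap. Qed.

End Blocks.

Section BlockEstimates.
Context (R : realType) d (T : measurableType d) (P : probability T R)
  (xi : int -> T -> R) (u : R).
Hypothesis mxi : forall z, measurable_fun setT (xi z).
Context (Om : Type) (X : nat -> Om -> int) (k l : nat -> nat) (n : nat) (w : Om).
Hypothesis k_ge2 : (2 <= k n)%N.

Let S := range_seq X n w.
Let K := Kn X k n w.
Let B := block X k n w.
Let L := stripes X k l n w.

Lemma prod_ord_map_iota (F : nat -> seq int) (G : seq int -> R) m :
  \prod_(j < m) G (F j) = \prod_(b <- [seq F j | j <- iota 0 m]) G b.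
Proof. by rewrite big_map -(big_mkord xpredT (fun j => G (F j))) /index_iota subn0. Qed.

Section Exceedance.
Variable p : R.
Hypothesis exceed_le : forall z, prR P [set w | u < xi z w] <= p.

Let p_ge0 : 0 <= p.
Proof. exact: le_trans (prR_ge0 _ _) (exceed_le 0). Qed.

Lemma removing_stripes_estimate :
  `|prR P (max_le xi S u) - prR P (max_le xi [seq z <- S | z \notin L] u)|
    <= (k n * l n)%:R * p.
Proof.
have /andP[h1 h2] := prR_max_le_filter mxi exceed_le L S.
rewrite distrC ger0_norm //; apply: le_trans h2 _; apply: ler_wpM2r => //.
rewrite ler_nat; apply: leq_trans (size_stripes_le X l w k_ge2).
exact: count_mem_uniq_le (uniq_range X n w).
Qed.

Lemma stripped_blocks_estimate :
  `|\prod_(j < K) prR P (max_le xi [seq z <- B j | z \notin L] u)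
    - \prod_(j < K) prR P (max_le xi (B j) u)| <= (k n * l n)%:R * p.
Proof.
rewrite (prod_ord_map_iota B (fun b => prR P (max_le xi [seq z <- b | z \notin L] u))).
rewrite (prod_ord_map_iota B (fun b => prR P (max_le xi b u))).
apply: le_trans (norm_prodB_le_sum _ _ _) _; try by move=> b; exact: prR_max_le_01.
apply: le_trans (_ : \sum_(b <- [seq B j | j <- iota 0 K])
    (count (mem L) b)%:R * p <= _).
  apply: ler_sum => b _.
  by have /andP[h1 h2] := prR_max_le_filter mxi exceed_le L b; rewrite ger0_norm.
rewrite -mulr_suml -natr_sum; apply: ler_wpM2r => //; rewrite ler_nat.
rewrite [X in (X <= _)%N](_ : _ = count (mem L) S); last first.
  by rewrite /S -[in RHS](flatten_range_blocks X k) count_flatten sumnE !big_map.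
apply: leq_trans (size_stripes_le X l w k_ge2).
exact: count_mem_uniq_le (uniq_range X n w).
Qed.

End Exceedance.

Lemma stripped_blocks_mixing_estimate (al : R) :
  (0 < l n)%N -> 0 <= al ->
  (forall (i j : seq int), i != [::] -> j != [::] ->
    sorted (fun x y : int => x < y) i -> sorted (fun x y : int => x < y) j ->
    last 0 i < head 0 j -> last 0 i + (l n)%:Z <= head 0 j ->
    `| Fjoint P xi (i ++ j) u - Fjoint P xi i u * Fjoint P xi j u | <= al) ->
  `|prR P (max_le xi [seq z <- S | z \notin L] u)
    - \prod_(j < K) prR P (max_le xi [seq z <- B j | z \notin L] u)|
    <= (k n)%:R * al.
Proof.
move=> l_gt0 al_ge0 mixing.
rewrite (prod_ord_map_iota (fun j => [seq z <- B j | z \notin L])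
  (fun b => prR P (max_le xi b u))) filter_range_blocks.
apply: le_trans (prR_max_le_flatten mxi l_gt0 al_ge0 mixing _ _) _.
- exact: gapped_stripped_blocks.
- rewrite -filter_range_blocks; apply: sorted_filter; first exact: lt_trans.
  exact: sorted_range.
by rewrite size_map size_iota ler_wpM2r // ler_nat Kn_le_k.
Qed.

End BlockEstimates.

Lemma norm_le_cvg0 (R : realType) (G : nat -> Prop) (f g : nat -> R) :
  (\forall n \near \oo, G n) -> (forall n, G n -> `|f n| <= g n) ->
  g @ \oo --> (0 : R) -> f @ \oo --> (0 : R).
Proof.
move=> HG Hfg g0; apply: (@squeeze_cvgr _ _ _ _ (fun n => - g n) g f) => //.
- by apply: filterS HG => n /Hfg; rewrite ler_norml.
- by rewrite -oppr0; exact: cvgN.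
Qed.

Lemma k_eventually_between (R : realType) (k l : nat -> nat) :
  (forall M : nat, \forall n \near \oo, (M <= k n)%N) -> (forall n, (0 < l n)%N) ->
  (fun n => (k n * l n)%:R / n%:R) @ \oo --> (0 : R) ->
  \forall n \near \oo, (2 <= k n)%N /\ (k n <= n)%N.
Proof.
move=> k_unbdd l_gt0 kl; near=> n; split; first by near: n; exact: k_unbdd.
have : (k n * l n)%:R / n%:R < (1 : R) by near: n; apply: (cvgr_lt 0 kl).
rewrite ltr_pdivrMr ?ltr0n; last by near: n; exact: nbhs_infty_gt.
rewrite mul1r ltr_nat => H; apply: leq_trans (ltnW H); exact: leq_pmulr.
Unshelve. all: by end_near.
Qed.

Lemma cvg_mass_of_stripes (R : realType) (k l : nat -> nat) (p : nat -> R) (tau : R) :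
  (fun n => (k n * l n)%:R / n%:R) @ \oo --> (0 : R) ->
  (fun n => n%:R * p n) @ \oo --> tau ->
  (fun n => (k n * l n)%:R * p n) @ \oo --> (0 : R).
Proof.
move=> kl np; apply: cvg_trans (near_eq_cvg _) _; last first.
  by rewrite -(mul0r tau); exact: cvgM kl np.
near=> n; rewrite /= mulrA divfK // pnatr_eq0 -lt0n.
by near: n; exact: nbhs_infty_gt.
Unshelve. all: by end_near.
Qed.

Lemma ler_nat_div_sqr (R : realType) (m n : nat) : (0 < m)%N -> (m <= n)%N ->
  m%:R <= n%:R ^+ 2 / m%:R :> R.
Proof.
move=> m_gt0 mn; rewrite ler_pdivlMr ?ltr0n // -expr2 lerXn2r ?nnegrE ?ler0n //.
by rewrite ler_nat.
Qed.

Theorem lemma1 (R : realType) (d1 d2 : measure_display)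
  (Om1 : measurableType d1) (Om2 : measurableType d2)
  (P1 : probability Om1 R) (P2 : probability Om2 R)
  (X : nat -> Om1 -> int) (a : R)
  (xi : int -> Om2 -> R) (u : nat -> R) (tau : R)
  (alph : nat -> nat -> R) (l k : nat -> nat) :
  iid_int P1 X -> 0 < a < 1 -> domain_of_attraction P1 X a ->
  (forall z, measurable_fun setT (xi z)) -> stationary P2 xi ->
  0 <= tau ->
  (fun n => n%:R * prR P2 [set w2 | u n < xi 0 w2]) @ \oo --> tau ->
  cond_D P2 xi u alph l -> cond_D' P2 xi u alph l k ->
  {ae P1, forall w,
    [/\ (fun n => prR P2 (max_le xi (range_seq X n w) (u n))
                 - prR P2 (max_le xi [seq z <- range_seq X n w
                                      | z \notin stripes X k l n w] (u n)))
          @ \oo --> (0 : R),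
        (fun n => prR P2 (max_le xi [seq z <- range_seq X n w
                                      | z \notin stripes X k l n w] (u n))
                 - \prod_(j < Kn X k n w)
                     prR P2 (max_le xi [seq z <- block X k n w j
                                      | z \notin stripes X k l n w] (u n)))
          @ \oo --> (0 : R) &
        (fun n => \prod_(j < Kn X k n w)
                     prR P2 (max_le xi [seq z <- block X k n w j
                                      | z \notin stripes X k l n w] (u n))
                 - \prod_(j < Kn X k n w)
                     prR P2 (max_le xi (block X k n w j) (u n)))
          @ \oo --> (0 : R)]}.
Proof.
move=> _ _ _ mxi stat _ np_tau [_ l_gt0 _ mixing] [_ k_unbdd kal kl _].
have k_between := k_eventually_between k_unbdd l_gt0 kl.
have stripes_vanish := cvg_mass_of_stripes kl np_tau.
have exceed n z : prR P2 [set w | u n < xi z w] <= prR P2 [set w | u n < xi 0 w].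
  by rewrite stationary_prR_exceed.
have alph_ge0 n : 0 <= alph n (l n).
  apply: le_trans (normr_ge0 _) (mixing n (l n) [:: 0] [:: (l n)%:Z] _ _ _ _ _ _) => //=.
  by rewrite ltz_nat.
apply: aeW => w; split.
- apply: (norm_le_cvg0 k_between) stripes_vanish => n [k2 _].
  exact: removing_stripes_estimate.
- apply: (norm_le_cvg0 k_between) kal => n [k2 kn].
  apply: le_trans (stripped_blocks_mixing_estimate _ _ _ k2 _ _ (mixing n (l n))) _ => //.
  by rewrite ler_wpM2r // ler_nat_div_sqr // (leq_trans _ k2).
- apply: (norm_le_cvg0 k_between) stripes_vanish => n [k2 _].
  exact: stripped_blocks_estimate.
Qed.
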